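(* Let $n$ be a positive integer and let $X$ have Student's $t$-distribution with $n$ degrees of freedom, i.e. density $f(x)=\frac{\Gamma(\frac{n+1}2)}{\sqrt{n\pi}\,\Gamma(\frac n2)(1+\frac{x^2}n)^{(n+1)/2}}$ on $\mathbb{R}$. Then $$\Pr\{|X|\ge x\}\le x\Big(\frac{n+1}{n+x^2}\Big)^{(n+1)/2}\quad\text{for } x\ge1,\qquad \Pr\{|X|\le x\}\le x\Big(\frac{n+1}{n+x^2}\Big)^{(n+1)/2}\quad\text{for } 0\le x\le1,$$ and the function $x\mapsto x\big(\frac{n+1}{n+x^2}\big)^{(n+1)/2}$ is monotonically increasing on $(0,1)$ and monotonically decreasing on $(1,\infty)$. *)

From HB Require Import structures.
From mathcomp Require Import all_boot all_order all_algebra.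
From mathcomp Require Import all_classical all_reals all_analysis.
Set Implicit Arguments. Unset Strict Implicit. Unset Printing Implicit Defensive.
Import Order.TTheory GRing.Theory Num.Theory.
Import numFieldNormedType.Exports.
Local Open Scope classical_set_scope.
Local Open Scope ring_scope.

Definition Gamma (R : realType) (s : R) : R :=
  fine (\int[@lebesgue_measure R]_(t in `]0%R, +oo[%classic)
          (powR t (s - 1) * expR (- t))%:E)%E.

Definition student_density (R : realType) (n : nat) (x : R) : R :=
  Gamma ((n%:R + 1) / 2) /
  (Num.sqrt (n%:R * pi) * Gamma (n%:R / 2) *
   powR (1 + x ^+ 2 / n%:R) ((n%:R + 1) / 2)).

Definition is_student_t (R : realType) (d : measure_display)
    (T : measurableType d) (P : probability T R) (X : {RV P >-> R}) (n : nat) :=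
  forall A : set R, measurable A ->
    P (X @^-1` A) = (\int[@lebesgue_measure R]_(t in A) (student_density n t)%:E)%E.

Definition student_bound (R : realType) (n : nat) (x : R) : R :=
  x * powR ((n%:R + 1) / (n%:R + x ^+ 2)) ((n%:R + 1) / 2).

(* Write f for the Student density and g for the bound.  The substitution
   t = x s gives P(X \in S) = \int_{S/x} x f(x s) ds, and since
     (n+1)/(n+x^2) * (1 + (x s)^2/n) - (1 + s^2/n) = (x^2-1)(s^2-1)/(n+x^2),
   we get x f(x s) <= g(x) f(s) whenever (x^2-1)(s^2-1) >= 0.  This holds on
   S/x both for S = {|t| >= x} with x >= 1 and for S = {|t| <= x} with x <= 1,
   so P(X \in S) <= g(x) \int f = g(x).  For the monotonicity, 2 ln g(x) is,
   up to a constant, ln u - (n+1) ln (n+u) with u = x^2; the tangent line of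
   the convex map t |-> ln (n + e^t) bounds the second term against the first
   on either side of u = 1. *)

From HB Require Import structures.
From mathcomp Require Import all_boot all_order all_algebra.
From mathcomp Require Import all_classical all_reals all_analysis.
From mathcomp Require Import ring lra.
From mathcomp Require Import measurable_realfun.
Import Order.TTheory GRing.Theory Num.Theory.
Import numFieldNormedType.Exports.
Local Open Scope classical_set_scope.
Local Open Scope ring_scope.

Lemma Gamma_ge0 (R : realType) (s : R) : 0 <= Gamma s.
Proof.
apply: fine_ge0; apply: integral_ge0 => t _.
by rewrite lee_fin mulr_ge0 ?powR_ge0 ?expR_ge0.
Qed.

(* Tangent line at [ln u] of the convex function [t |-> ln (m + e^t)]. *)
Lemma ln_add_tangent {R : realType} (m u w : R) : 0 < m -> 0 < u -> 0 < w ->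
  u / (m + u) * (ln w - ln u) <= ln (m + w) - ln (m + u).
Proof.
move=> m0 u0 w0.
have t01 : Itv.spec (@Itv.num_sem R) (Itv.Real `[0, 1]%Z) (u / (m + u)).
  have mu0 : 0 < m + u by lra.
  rewrite /= /Itv.num_sem /= in_itv /= ger0_real ?divr_ge0 ?(ltW u0) ?(ltW mu0) //=.
  by rewrite ler_pdivrMr // mul1r; lra.
have := @concave_ln R (Itv.Def t01) (w / u) 1 (divr_gt0 w0 u0) ltr01.
rewrite !convRE /= ln1 mulr0 addr0.
have -> : u / (m + u) * (w / u) + (1 - u / (m + u)) * 1 = (m + w) / (m + u).
  by field; apply/andP; split; lra.
by rewrite !ln_div ?posrE //; lra.
Qed.

Section student_bound.
Variables (R : realType) (n : nat).
Hypothesis n_gt0 : (0 < n)%N.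

Let n_gt0R : 0 < n%:R :> R. Proof. by rewrite ltr0n. Qed.

Definition student_const : R :=
  Gamma ((n%:R + 1) / 2) / (Num.sqrt (n%:R * pi) * Gamma (n%:R / 2)).

Lemma student_const_ge0 : 0 <= student_const.
Proof. by rewrite divr_ge0 ?mulr_ge0 ?Gamma_ge0 ?sqrtr_ge0. Qed.

Lemma student_densityE (t : R) : student_density n t =
  student_const * (1 + t ^+ 2 / n%:R) `^ (- ((n%:R + 1) / 2)).
Proof. by rewrite powRN /student_density /student_const invfM mulrA. Qed.

Lemma student_density_ge0 (t : R) : 0 <= student_density n t.
Proof. by rewrite student_densityE mulr_ge0 ?student_const_ge0 ?powR_ge0. Qed.

Lemma measurable_student_density : measurable_fun setT (@student_density R n).
Proof.
rewrite (funext student_densityE).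
apply: measurable_funM => //; apply: measurableT_comp (measurable_powR _) _.
by apply: measurable_funD => //; apply: measurable_funM.
Qed.

Lemma student_density_scale_le (x s : R) : 0 < x ->
  0 <= (x ^+ 2 - 1) * (s ^+ 2 - 1) ->
  x * student_density n (x * s) <= student_bound n x * student_density n s.
Proof.
move=> x0 hxs.
rewrite !student_densityE /student_bound.
set r := (n%:R + 1) / (n%:R + x ^+ 2).
set q := fun t : R => 1 + t ^+ 2 / n%:R.
have q_gt0 t : 0 < q t by rewrite ltr_pwDl // divr_ge0 ?sqr_ge0 ?ltW.
have nx2_gt0 : 0 < n%:R + x ^+ 2 by rewrite ltr_wpDr ?sqr_ge0.
have r_gt0 : 0 < r by rewrite divr_gt0 // ltr_wpDl.
have qs_le : q s <= r * q (x * s).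
  rewrite -subr_ge0 (_ : _ - _ = (x ^+ 2 - 1) * (s ^+ 2 - 1) / (n%:R + x ^+ 2)).
    by rewrite divr_ge0 // ltW.
  by rewrite /r /q; field; rewrite !gt_eqF.
rewrite -/(q _) -/(q s).
rewrite -mulrA ler_pM2l // mulrCA ler_wpM2l ?student_const_ge0 //.
rewrite !powRN ler_pdivlMr ?powR_gt0 // mulrC ler_pdivrMr ?powR_gt0 //.
rewrite -powRM ?(ltW r_gt0) ?(ltW (q_gt0 _)) //.
apply: ge0_ler_powR => //.
- by rewrite nnegrE ltW.
- by rewrite nnegrE mulr_ge0 // ltW.
Qed.

Lemma student_bound_gt0 (x : R) : 0 < x -> 0 < student_bound n x.
Proof.
move=> x0.
by rewrite mulr_gt0 // powR_gt0 // divr_gt0 ?ltr_wpDr ?sqr_ge0 // ltr_wpDl.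
Qed.

Lemma ln_student_bound (x : R) : 0 < x ->
  2 * ln (student_bound n x) =
  ln (x ^+ 2) + (n%:R + 1) * (ln (n%:R + 1) - ln (n%:R + x ^+ 2)).
Proof.
move=> x0; have nx2_gt0 : 0 < n%:R + x ^+ 2 by rewrite ltr_wpDr ?sqr_ge0.
have n1_gt0 : 0 < n%:R + 1 :> R by rewrite ltr_wpDl.
rewrite lnM ?posrE ?powR_gt0 ?divr_gt0 // ln_powR ln_div ?posrE // lnXn //.
by rewrite -mulr_natl; field.
Qed.

Lemma student_bound_increasing (a b : R) : 0 < a -> a < b -> b < 1 ->
  student_bound n a < student_bound n b.
Proof.
move=> a0 ab b1; have b0 : 0 < b by lra.
rewrite -ltr_ln ?posrE ?student_bound_gt0 // -(ltr_pM2l (_ : 0 < 2)) //.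
rewrite !ln_student_bound //.
have a2b2 : a ^+ 2 < b ^+ 2 by rewrite ltr_pXn2r // ?nnegrE ltW.
have b2_lt1 : b ^+ 2 < 1 by rewrite expr_lt1 ?ltW.
have a2_gt0 : 0 < a ^+ 2 by rewrite exprn_gt0.
have := ln_add_tangent _ _ _ n_gt0R (lt_trans a2_gt0 a2b2) a2_gt0.
have : ln (a ^+ 2) < ln (b ^+ 2) by rewrite ltr_ln ?posrE // (lt_trans a2_gt0).
have : (n%:R + 1) * (b ^+ 2 / (n%:R + b ^+ 2)) < 1.
  by rewrite mulrA ltr_pdivrMr ?mul1r; have := n_gt0R; nra.
set k := _ / _; set L := ln (a ^+ 2); set L' := ln (b ^+ 2).
set D := ln (_ + a ^+ 2); set D' := ln (_ + b ^+ 2).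
have := n_gt0R; nra.
Qed.

Lemma student_bound_decreasing (a b : R) : 1 < a -> a < b ->
  student_bound n b < student_bound n a.
Proof.
move=> a1 ab; have a0 : 0 < a by lra.
have b0 : 0 < b by lra.
rewrite -ltr_ln ?posrE ?student_bound_gt0 // -(ltr_pM2l (_ : 0 < 2)) //.
rewrite !ln_student_bound //.
have a2b2 : a ^+ 2 < b ^+ 2 by rewrite ltr_pXn2r // ?nnegrE ltW.
have a2_gt1 : 1 < a ^+ 2 by rewrite expr_gt1 ?ltW.
have a2_gt0 : 0 < a ^+ 2 by rewrite exprn_gt0.
have := ln_add_tangent _ _ _ n_gt0R a2_gt0 (lt_trans a2_gt0 a2b2).
have : ln (a ^+ 2) < ln (b ^+ 2) by rewrite ltr_ln ?posrE // (lt_trans a2_gt0).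
have : 1 < (n%:R + 1) * (a ^+ 2 / (n%:R + a ^+ 2)).
  by rewrite mulrA ltr_pdivlMr ?mul1r; have := n_gt0R; nra.
set k := _ / _; set L := ln (a ^+ 2); set L' := ln (b ^+ 2).
set D := ln (_ + a ^+ 2); set D' := ln (_ + b ^+ 2).
have := n_gt0R; nra.
Qed.

End student_bound.

Section lebesgue_dilation.
Context {R : realType} {c : R}.
Hypothesis c_gt0 : 0 < c.

Let mulc_measurable :
  measurable_fun setT ( *%R c : measurableTypeR R -> measurableTypeR R) :=
  @mulrl_measurable R setT c.

(* The image of Lebesgue measure under [s |-> c * s]; [pushforward] is only
   registered as a measure through this instance, which takes the
   measurability proof as an argument. *)
Let dilated : {measure set measurableTypeR R -> \bar R} :=
  measure_function_pushforward__canonical__measure_function_Measure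
    lebesgue_measure mulc_measurable.

Lemma lebesgue_measure_dilation (A : set R) : measurable A ->
  lebesgue_measure A = (c%:E * lebesgue_measure (( *%R c) @^-1` A))%E.
Proof.
move=> mA.
apply: (@lebesgue_measure_unique R (mscale (NngNum (ltW c_gt0)) dilated) _ A mA).
move=> _ [[a b] _ <-]; rewrite /= /mscale /= /pushforward.
have -> : ( *%R c) @^-1` `]a, b]%classic = `]a / c, b / c]%classic.
  by apply/seteqP; split => x /=; rewrite !in_itv /= ler_pdivlMr // ltr_pdivrMr // mulrC.
rewrite !lebesgue_measure_itv /= !lte_fin ltr_pM2r ?invr_gt0 //.
case: ifP => _; last by rewrite mule0.
by rewrite -EFinB -EFinM -mulrBl mulrCA mulfV ?gt_eqF // mulr1.
Qed.

Lemma ge0_integral_dilation (f : R -> R) (A : set R) : measurable A ->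
  measurable_fun setT f -> (forall t, 0 <= f t) ->
  (\int[lebesgue_measure]_(t in A) (f t)%:E =
   \int[lebesgue_measure]_(s in ( *%R c) @^-1` A) (c * f (c * s))%:E)%E.
Proof.
move=> mA mf f0.
have mfE : measurable_fun A (EFin \o f).
  by apply/measurable_EFinP; exact: measurable_funS mf.
have mcA : measurable (( *%R c) @^-1` A).
  by rewrite -[X in measurable X]setTI; apply: mulc_measurable.
transitivity (\int[mscale (NngNum (ltW c_gt0)) dilated]_(t in A) (f t)%:E)%E.
  by apply: eq_measure_integral => B mB _; apply: lebesgue_measure_dilation.
rewrite ge0_integral_mscale //; last by move=> t _; rewrite lee_fin.
rewrite (ge0_integral_pushforward mulc_measurable) //; last by move=> t _; rewrite lee_fin.
under [RHS]eq_integral do rewrite EFinM.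
rewrite ge0_integralZl_EFin ?(ltW c_gt0) //; first by move=> t _; rewrite lee_fin.
apply/measurable_EFinP; exact: measurable_funS (measurableT_comp mf mulc_measurable).
Qed.

End lebesgue_dilation.

Section student_t.
Context {R : realType} {d : measure_display} {T : measurableType d}.
Context {P : probability T R} {X : {RV P >-> R}} {n : nat}.
Hypotheses (n_gt0 : (0 < n)%N) (X_student : is_student_t X n).

Lemma student_t_prob_le (x : R) (S : set R) : 0 < x -> measurable S ->
  (forall s, S (x * s) -> 0 <= (x ^+ 2 - 1) * (s ^+ 2 - 1)) ->
  (P (X @^-1` S) <= (student_bound n x)%:E)%E.
Proof.
move=> x0 mS hS.
have g_ge0 : 0 <= student_bound n x by exact/ltW/student_bound_gt0.
have f_ge0 := @student_density_ge0 R n.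
have mf := @measurable_student_density R n.
have mxS : measurable (( *%R x) @^-1` S).
  by rewrite -[X in measurable X]setTI; exact: mulrl_measurable.
rewrite X_student // (ge0_integral_dilation x0 _ _ mS mf f_ge0).
apply: (@le_trans _ _ (\int[lebesgue_measure]_(s in ( *%R x) @^-1` S)
    (student_bound n x * student_density n s)%:E)%E).
  apply: ge0_le_integral => //.
  - by move=> s _; rewrite lee_fin mulr_ge0 // ltW.
  - apply/measurable_EFinP/measurable_funM => //.
    by apply: measurable_funTS; apply: (measurableT_comp mf); exact: mulrl_measurable.
  - apply/measurable_EFinP/measurable_funM => //; exact: measurable_funS mf.
  - by move=> s Ss; rewrite lee_fin student_density_scale_le ?hS.
under eq_integral do rewrite EFinM.
rewrite ge0_integralZl_EFin //; last 2 first.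
- by move=> s _; rewrite lee_fin.
- by apply/measurable_EFinP; exact: measurable_funS mf.
rewrite -[leRHS]mule1 lee_wpmul2l ?lee_fin //.
rewrite -(probability_setT P) -(preimage_setT X) X_student //.
apply: ge0_subset_integral => //; last by move=> t _; rewrite lee_fin.
exact: measurableT_comp mf.
Qed.

Lemma student_t_tail_le (x : R) : 1 <= x ->
  (P [set w | (x <= `|X w|)%R] <= (student_bound n x)%:E)%E.
Proof.
move=> x_ge1; have x0 : 0 < x by lra.
have mS : measurable [set t : R | x <= `|t|].
  by rewrite -[X in measurable X]setTI; apply: measurable_fun_le => //; exact: normr_measurable.
apply: (student_t_prob_le _ _ x0 mS) => s /=.
rewrite normrM gtr0_norm // -{1}[x]mulr1 ler_pM2l // => s_ge1.
have s2_ge1 : 1 <= s ^+ 2 by rewrite -real_normK ?num_real // expr_ge1.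
by rewrite mulr_ge0 // subr_ge0 // expr_ge1 // ltW.
Qed.

Lemma student_t_center_le (x : R) : 0 <= x <= 1 ->
  (P [set w | (`|X w| <= x)%R] <= (student_bound n x)%:E)%E.
Proof.
case/andP=> x_ge0 x_le1; have [->|xn0] := eqVneq x 0.
  have -> : [set w | `|X w| <= 0] = X @^-1` [set 0].
    by apply/seteqP; split => w /=; rewrite normr_le0 => /eqP.
  by rewrite X_student // integral_set1 /student_bound mul0r.
have x0 : 0 < x by rewrite lt_neqAle eq_sym xn0.
have mS : measurable [set t : R | `|t| <= x].
  by rewrite -[X in measurable X]setTI; apply: measurable_fun_le => //; exact: normr_measurable.
apply: (student_t_prob_le _ _ x0 mS) => s /=.
rewrite normrM gtr0_norm // -{2}[x]mulr1 ler_pM2l // => s_le1.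
have s2_le1 : s ^+ 2 <= 1 by rewrite -real_normK ?num_real // expr_le1.
by rewrite mulr_le0 // subr_le0 // expr_le1.
Qed.

End student_t.

Theorem corollary9 (R : realType) (d : measure_display) (T : measurableType d)
    (P : probability T R) (X : {RV P >-> R}) (n : nat) :
  (0 < n)%N -> is_student_t X n ->
  [/\ (forall x : R, 1 <= x ->
         (P [set w | (x <= `|X w|)%R] <= (student_bound n x)%:E)%E),
      (forall x : R, 0 <= x <= 1 ->
         (P [set w | (`|X w| <= x)%R] <= (student_bound n x)%:E)%E),
      {in `]0 : R, 1[ &, {homo @student_bound R n : a b / a < b}} &
      {in `]1 : R, +oo[ &, {homo @student_bound R n : a b / a < b >-> b < a}}].
Proof.
move=> n_gt0 X_student; split.
- exact: student_t_tail_le.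
- exact: student_t_center_le.
- move=> a b; rewrite !in_itv /= => /andP[a0 _] /andP[_ b1] ab.
  exact: student_bound_increasing.
- move=> a b; rewrite !in_itv /= !andbT => a1 _ ab.
  exact: student_bound_decreasing.
Qed.
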